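(* Let $\Sigma$ be an Ehrhart fan. Then there is a unique function $\chi_\Sigma:\underline{\mathrm{PL}}(\Sigma)\to\mathbb{Z}$ satisfying condition (2) of the definition of Ehrhart fans (with $\chi_{\Sigma^\rho}$ the, inductively unique, such functions for the star fans). Moreover, the function $\widehat\chi_\Sigma:\mathbb{Z}^{\Sigma(1)}=\mathrm{PL}(\Sigma)\to\mathbb{Z}$, $f\mapsto\chi_\Sigma([f])$, agrees with a polynomial in $\mathbb{Q}[x_\rho\mid\rho\in\Sigma(1)]$ (evaluated at $x_\rho=f(u_\rho)$) of degree $\dim\Sigma$.
   Context: $N$ is a free abelian group of rank $n$, $N_\mathbb{R}=N\otimes\mathbb{R}$, $M=\mathrm{Hom}(N,\mathbb{Z})$, viewed as integral linear functions on $N_\mathbb{R}$. A fan $\Sigma$ (finite collection of rational polyhedral cones closed under faces, pairwise intersecting in common faces) is unimodular if it contains the origin and for each cone the primitive ray generators $u_\rho\in N$ of its rays extend to a $\mathbb{Z}$-basis of $N$. $\mathrm{PL}(\Sigma)$ is the group of functions $f:|\Sigma|\to\mathbb{R}$ with $f|_\sigma=m|_\sigma$ for some $m\in M$ on each cone $\sigma$; $\mathrm{L}(\Sigma)$ is the subgroup of restrictions of elements of $M$; $\underline{\mathrm{PL}}(\Sigma)=\mathrm{PL}(\Sigma)/\mathrm{L}(\Sigma)$. For unimodular $\Sigma$, $\mathrm{PL}(\Sigma)\cong\mathbb{Z}^{\Sigma(1)}$ via $f\mapsto(f(u_\rho))_\rho$, and the Courant function $\delta_\rho\in\mathrm{PL}(\Sigma)$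 takes value $1$ at $u_\rho$ and $0$ at all other ray generators. For a cone $\sigma$ of a unimodular fan $\Sigma$, the star fan $\Sigma^\sigma$ is the fan in $N^\sigma_\mathbb{R}$, where $N^\sigma=N/\mathrm{Span}_\mathbb{Z}(\sigma\cap N)$, consisting of the images under the quotient map of all cones of $\Sigma$ that are faces of cones containing $\sigma$; it is unimodular with respect to $N^\sigma$. For $f\in\mathrm{PL}(\Sigma)$, $[f]^\sigma\in\underline{\mathrm{PL}}(\Sigma^\sigma)$ is the class of the function induced on $\Sigma^\sigma$ by $f-m$, where $m\in M$ agrees with $f$ on $\sigma$ (independent of the choice). Ehrhart fans are defined recursively on dimension: a unimodular fan $\Sigma$ is Ehrhart if (1) $\Sigma^\rho$ is Ehrhart for every $\rho\in\Sigma(1)$, and (2) there is a function $\chi_\Sigma:\underline{\mathrm{PL}}(\Sigma)\to\mathbb{Z}$ with $\chi_\Sigma(0)=1$ and $\chi_\Sigma([f])=\chi_\Sigma([f-\delta_\rho])+\chi_{\Sigma^\rho}([f]^\rho)$ for all $f\in\mathrm{PL}(\Sigma)$ and $\rho\in\Sigma(1)$, where $\chi_{\Sigma^\rho}$ is the corresponding function for $\Sigma^\rho$. (A zero-dimensional fan is Ehrhart with $\chi=1$.) *)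

From HB Require Import structures.
From mathcomp Require Import all_boot all_order all_algebra.
From mathcomp Require Import Rstruct.
From mathcomp Require Import mpoly.
Set Implicit Arguments. Unset Strict Implicit. Unset Printing Implicit Defensive.
Import Order.TTheory GRing.Theory Num.Theory.
Local Open Scope ring_scope.

Section Fans.
(* A unimodular fan in N = Z^n is encoded by its finite set of rays V,
   the primitive ray generators u : V -> N, and its cones, each cone being
   given by the set of its rays (cones of unimodular fans are simplicial,
   generated by their rays). *)
Variables (n : nat) (V : finType) (u : V -> 'rV[int]_n) (C : {set {set V}}).

(* the pairing M x N -> Z, with M = Hom(N,Z) identified with Z^n *)
Definition pairing (m x : 'rV[int]_n) : int := \sum_(i < n) m 0 i * x 0 i.

Definition coneR (S : {set V}) (x : 'rV[Rdefinitions.R]_n) : Prop :=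
  exists lam : V -> Rdefinitions.R, (forall v, 0 <= lam v) /\
    x = \sum_(v in S) lam v *: map_mx (fun z : int => z%:~R) (u v).

Definition unimodular_fan : Prop :=
  [/\ set0 \in C,
      (* V is exactly the set of rays Sigma(1) *)
      forall v, [set v] \in C,
      (* closed under faces (faces of a simplicial cone = subsets of rays) *)
      forall S T : {set V}, S \in C -> T \subset S -> T \in C,
      (* pairwise intersecting in common faces *)
      forall S T : {set V}, S \in C -> T \in C ->
        forall x, coneR S x -> coneR T x -> coneR (S :&: T) x &
      (* unimodularity: generators of each cone extend to a Z-basis of N *)
      forall S : {set V}, S \in C -> exists B : 'M[int]_n, B \in unitmx /\
        exists e : V -> 'I_n, {in S &, injective e} /\
          {in S, forall v, row (e v) B = u v}].

(* Star fan Sigma^s of the cone s: its rays are (the images of) the rays in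
   link s; PL(Sigma^s) = Z^(link s), represented by functions V -> int whose
   values outside link s are irrelevant; L(Sigma^s) = restrictions of
   M^s = Hom(N^s, Z) = { m in M | m vanishes on s }. *)
Definition link (s : {set V}) : {set V} :=
  [set v | (v \notin s) && ((v |: s) \in C)].

Definition linear_on_star (s : {set V}) (g : V -> int) : Prop :=
  exists m : 'rV[int]_n, (forall v, v \in s -> pairing m (u v) = 0) /\
    (forall v, v \in link s -> g v = pairing m (u v)).

(* f and g define the same class in PL(Sigma^s)/L(Sigma^s) *)
Definition pl_equiv (s : {set V}) (f g : V -> int) : Prop :=
  linear_on_star s (fun v => f v - g v).

Definition well_defined (s : {set V}) (chi : (V -> int) -> int) : Prop :=
  forall f g, pl_equiv s f g -> chi f = chi g.

Definition courant (r : V) : V -> int := fun v => (v == r)%:Z.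

(* is_chiF d s chi : chi is an Ehrhart function chi_{Sigma^s} (d = fuel,
   always equal to #|~: s|, which decreases when passing to a star). *)
Fixpoint is_chiF (d : nat) (s : {set V}) (chi : (V -> int) -> int) : Prop :=
  [/\ well_defined s chi, chi (fun _ => 0) = 1 &
   match d with
   | 0 => link s = set0
   | d'.+1 =>
     forall r, r \in link s ->
       (exists psi, is_chiF d' (r |: s) psi) /\
       (* (2) the recursion, with psi the function of the star fan and
          f - m (m in M^s agreeing with f on r) representing [f]^r *)
       (forall psi, is_chiF d' (r |: s) psi ->
        forall (f : V -> int) (m : 'rV[int]_n),
          (forall v, v \in s -> pairing m (u v) = 0) ->
          pairing m (u r) = f r ->
          chi f = chi (fun v => f v - courant r v)
                  + psi (fun v => f v - pairing m (u v)))
   end].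

Definition is_chi (s : {set V}) (chi : (V -> int) -> int) : Prop :=
  is_chiF #|~: s| s chi.

(* Sigma (= Sigma^{0}) is Ehrhart *)
Definition ehrhart : Prop := exists chi, is_chi set0 chi.

(* dimension of the fan = max dimension of a cone = max number of rays *)
Definition fan_dim : nat := \max_(S in C) #|S|.

End Fans.

(* evaluation of a polynomial in Q[x_rho | rho in V] at x_rho = f rho;
   variables are indexed by 'I_#|V| via enum_val *)
Definition eval_at (V : finType) (p : {mpoly rat[#|V|]}) (f : V -> int) : rat :=
  p.@[fun i : 'I_#|V| => (f (enum_val i))%:~R].

(* Write [deg_lt k F] when all k-fold backward differences of F : Z^V -> R vanish.
   Recursion (2) says that the difference of chi_Sigma in the direction of a
   Courant function delta_rho is chi_{Sigma^rho} after a linear change of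
   variables, and that it vanishes when rho is not a ray.  Induction on star
   fans then gives [deg_lt (dim Sigma).+1 chi_Sigma], and not
   [deg_lt (dim Sigma) chi_Sigma] (difference along a ray of a maximal cone,
   whose star has dimension dim Sigma - 1); the difference of two solutions has
   vanishing first differences, so it is constant, equal to 1 - 1 = 0.
   Newton interpolation in one variable at a time identifies the functions
   with [deg_lt D.+1] with polynomials of total degree at most D. *)

From HB Require Import structures.
From mathcomp Require Import all_boot all_order all_algebra.
From mathcomp Require Import Rstruct.
From mathcomp Require Import mpoly.
From mathcomp Require Import zify ring.
From Stdlib Require Import FunctionalExtensionality.
Import Order.TTheory GRing.Theory Num.Theory.
Local Open Scope ring_scope.
Set Implicit Arguments. Unset Strict Implicit. Unset Printing Implicit Defensive.

Section FiniteDifferences.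
Variables (V : finType) (R : zmodType).
Implicit Types (F G : (V -> int) -> R) (f g w : V -> int).

Definition fdiff w F : (V -> int) -> R := fun f => F f - F (fun v => f v - w v).

Fixpoint deg_lt (k : nat) F : Prop :=
  if k is k'.+1 then forall w, deg_lt k' (fdiff w F) else forall f, F f = 0.

Lemma eq_deg_lt k F G : F =1 G -> deg_lt k F -> deg_lt k G.
Proof.
elim: k F G => [|k IH] F G eFG hF /=; first by move=> f; rewrite -eFG.
by move=> w; apply: IH (hF w) => f; rewrite /fdiff !eFG.
Qed.

Lemma deg_lt_zero k : deg_lt k (fun _ => 0).
Proof.
elim: k => [//|k IH] w; apply: eq_deg_lt IH => f; by rewrite /fdiff subrr.
Qed.

Lemma deg_ltD k F G : deg_lt k F -> deg_lt k G -> deg_lt k (fun f => F f + G f).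
Proof.
elim: k F G => [|k IH] F G hF hG /=; first by move=> f; rewrite hF hG addr0.
move=> w; apply: eq_deg_lt (IH _ _ (hF w) (hG w)) => f.
by rewrite /fdiff opprD addrACA.
Qed.

Lemma deg_ltN k F : deg_lt k F -> deg_lt k (fun f => - F f).
Proof.
elim: k F => [|k IH] F hF /=; first by move=> f; rewrite hF oppr0.
by move=> w; apply: eq_deg_lt (IH _ (hF w)) => f; rewrite /fdiff opprD.
Qed.

Lemma deg_lt_comp k F (L : (V -> int) -> V -> int) :
  (forall f w v, L (fun x => f x - w x) v = L f v - L w v) ->
  deg_lt k F -> deg_lt k (fun f => F (L f)).
Proof.
move=> addL; elim: k F => [|k IH] F hF /=; first by move=> f; rewrite hF.
move=> w; apply: eq_deg_lt (IH _ (hF (L w))) => f; rewrite /fdiff; congr (_ - F _).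
by apply: functional_extensionality => v; rewrite addL.
Qed.

Lemma deg_lt_translate k F a : deg_lt k F -> deg_lt k (fun f => F (fun v => f v - a v)).
Proof.
elim: k F => [|k IH] F hF /=; first by move=> f; rewrite hF.
move=> w; apply: eq_deg_lt (IH _ (hF w)) => f; rewrite /fdiff; congr (_ - F _).
by apply: functional_extensionality => v; rewrite addrAC.
Qed.

Lemma deg_lt_cst (c : R) : deg_lt 1 (fun _ : V -> int => c).
Proof. by move=> w f; rewrite /fdiff subrr. Qed.

Lemma deg_ltS k F : deg_lt k F -> deg_lt k.+1 F.
Proof.
elim: k F => [|k IH] F hF w /=; last exact/IH/hF.
by move=> f; rewrite /fdiff !hF subrr.
Qed.

Lemma deg_lt_leq k k' F : (k <= k')%N -> deg_lt k F -> deg_lt k' F.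
Proof.
move=> /subnKC <-; elim: (k' - k)%N => [|j IH] hF; first by rewrite addn0.
by rewrite addnS; apply/deg_ltS/IH.
Qed.

Lemma deg_lt_iter_fdiff j k F w :
  deg_lt (j + k) F -> deg_lt j (iter k (fdiff w) F).
Proof. by elim: k j => [|k IH] j; rewrite ?addn0 // -addSnnS => /IH; apply. Qed.

Lemma deg_lt1P F f g : deg_lt 1 F -> F f = F g.
Proof.
move=> /(_ (fun v => f v - g v) f) /subr0_eq ->; congr F.
by apply: functional_extensionality => v; rewrite opprB addrC subrK.
Qed.

Lemma deg_lt_sum (I : eqType) (r : seq I) k (F : I -> (V -> int) -> R) :
  {in r, forall i, deg_lt k (F i)} -> deg_lt k (fun f => \sum_(i <- r) F i f).
Proof.
elim: r => [|i r IH] hF.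
  by apply: eq_deg_lt (deg_lt_zero k) => f; rewrite big_nil.
have hr : {in r, forall j, deg_lt k (F j)} by move=> j jr; apply: hF; rewrite inE jr orbT.
by apply: eq_deg_lt (deg_ltD (hF i (mem_head i r)) (IH hr)) => f; rewrite big_cons.
Qed.

Definition depends_on (l : seq V) F := forall f g, {in l, f =1 g} -> F f = F g.

Lemma depends_on_iter_fdiff l k F w :
  depends_on l F -> depends_on l (iter k (fdiff w) F).
Proof.
move=> hF; elim: k => [//|k IH] f g fg /=; rewrite /fdiff (IH f g fg).
by congr (_ - _); apply: IH => v vl; rewrite fg.
Qed.

Lemma courant_line (P : (V -> int) -> Prop) a g :
  (forall f, P f -> P (fun v => f v + courant a v) /\ P (fun v => f v - courant a v)) ->
  P g -> forall k : int, P (fun v => g v + k * courant a v).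
Proof.
move=> stepP Pg; elim/int_rec => [|k IH|k IH].
- by move: Pg; congr P; apply: functional_extensionality => v; rewrite mul0r addr0.
- have := (stepP _ IH).1; congr P; apply: functional_extensionality => v.
  by rewrite intS; ring.
- have := (stepP _ IH).2; congr P; apply: functional_extensionality => v.
  by rewrite intS; ring.
Qed.

Lemma courant_ind (P : (V -> int) -> Prop) :
  P (fun _ => 0) ->
  (forall f a, P f -> P (fun v => f v + courant a v) /\ P (fun v => f v - courant a v)) ->
  forall f, P f.
Proof.
move=> P0 stepP.
suff PS (s : seq V) f : (forall v, v \notin s -> f v = 0) -> P f.
  by move=> f; apply: (PS (enum V)) => v; rewrite mem_enum.
elim: s f => [|a s IH] f fs.
  by move: P0; congr P; apply: functional_extensionality => v; rewrite fs.
pose g v := f v - f a * courant a v.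
have Pg : P g.
  apply: IH => v vs; rewrite /g /courant; case: eqVneq => [->|va].
    by rewrite mulr1 subrr.
  by rewrite mulr0 subr0 fs // inE negb_or va.
have := courant_line (stepP^~ a) Pg (f a); congr P.
by apply: functional_extensionality => v; rewrite /g subrK.
Qed.

Lemma deg_lt_courant k F : (forall a, deg_lt k (fdiff (courant a) F)) -> deg_lt k.+1 F.
Proof.
move=> hF w; elim/courant_ind: w => [|w a hw].
  apply: eq_deg_lt (deg_lt_zero k) => f; rewrite /fdiff.
  have -> : (fun v => f v - 0) = f by apply: functional_extensionality => v; rewrite subr0.
  by rewrite subrr.
have hwa := deg_lt_translate w (hF a).
split.
  apply: eq_deg_lt (deg_ltD hw hwa) => f; rewrite /fdiff addrA subrK.
  by congr (_ - F _); apply: functional_extensionality => v; rewrite opprD addrA.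
have hwa' := deg_lt_translate (fun v => w v - courant a v) (hF a).
apply: eq_deg_lt (deg_ltD hw (deg_ltN hwa')) => f; rewrite /fdiff.
have -> : (fun v => f v - (w v - courant a v) - courant a v) = (fun v => f v - w v).
  by apply: functional_extensionality => v; ring.
by rewrite opprB addrA subrK.
Qed.

End FiniteDifferences.

Section FiniteDifferencesRing.
Variables (V : finType) (R : pzRingType).
Implicit Types (F G : (V -> int) -> R).

Lemma deg_ltZ k (c : R) F : deg_lt k F -> deg_lt k (fun f => c * F f).
Proof.
elim: k F => [|k IH] F hF /=; first by move=> f; rewrite hF mulr0.
by move=> w; apply: eq_deg_lt (IH _ (hF w)) => f; rewrite /fdiff mulrBr.
Qed.

Lemma deg_ltM a b F G :
  deg_lt a F -> deg_lt b G -> deg_lt (a + b).-1 (fun f => F f * G f).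
Proof.
elim: a b F G => [|a IHa] b F G hF hG.
  by apply: eq_deg_lt (deg_lt_zero _ _ _) => f; rewrite hF mul0r.
elim: b F G hF hG => [|b IHb] F G hF hG.
  by apply: eq_deg_lt (deg_lt_zero _ _ _) => f; rewrite hG mulr0.
rewrite addSn addnS => w.
have dM f : fdiff w F f * G f + F (fun v => f v - w v) * fdiff w G f =
            fdiff w (fun f => F f * G f) f.
  by rewrite /fdiff mulrBl mulrBr addrA subrK.
apply: eq_deg_lt dM (deg_ltD _ _).
  by have := IHa _ _ _ (hF w) hG; rewrite addnS.
by have := IHb _ _ (deg_lt_translate w hF) (hG w); rewrite addSn.
Qed.

Lemma deg_lt_coord j : deg_lt 2 (fun f : V -> int => (f j)%:~R : R).
Proof.
move=> w; apply: eq_deg_lt (deg_lt_cst (w j)%:~R) => f.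
by rewrite /fdiff rmorphB /= opprB addrC subrK.
Qed.

Lemma deg_lt_prod (I : Type) (r : seq I) (e : I -> nat) (X : I -> (V -> int) -> R) :
  (forall i, deg_lt 2 (X i)) ->
  deg_lt (\sum_(i <- r) e i).+1 (fun f => \prod_(i <- r) X i f ^+ e i).
Proof.
move=> hX.
have deg_ltX i k : deg_lt k.+1 (fun f => X i f ^+ k).
  elim: k => [|k IH]; first by apply: eq_deg_lt (@deg_lt_cst V R 1) => f; rewrite expr0.
  have := deg_ltM (hX i) IH; rewrite add2n; apply: eq_deg_lt => f.
  by rewrite exprS.
elim: r => [|i r IH].
  by rewrite big_nil; apply: eq_deg_lt (@deg_lt_cst V R 1) => f; rewrite big_nil.
have := deg_ltM (deg_ltX i (e i)) IH; rewrite big_cons addSn addnS.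
by apply: eq_deg_lt => f; rewrite big_cons.
Qed.

End FiniteDifferencesRing.

Lemma deg_lt_intr (V : finType) (R : numDomainType) k (F : (V -> int) -> int) :
  deg_lt k (fun f => (F f)%:~R : R) <-> deg_lt k F.
Proof.
elim: k F => [|k IH] F /=.
  by split=> hF f; [apply/eqP; rewrite -(intr_eq0 R) hF | rewrite hF].
split=> hF w.
  by apply/IH; apply: eq_deg_lt (hF w) => f; rewrite /fdiff rmorphB.
by apply: eq_deg_lt ((IH _).2 (hF w)) => f; rewrite /fdiff rmorphB.
Qed.

Section Newton.
Context {K : numFieldType}.
Implicit Types h : int -> K.

Definition backdiff h : int -> K := fun x => h x - h (x - 1).

(* The binomial coefficient (x + k - 1 choose k). *)
Definition newton_basis (k : nat) (x : int) : K :=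
  (k`!%:R)^-1 * \prod_(i < k) (x%:~R + i%:R).

Lemma newton_basis0 x : newton_basis 0 x = 1.
Proof. by rewrite /newton_basis big_ord0 fact0 invr1 mulr1. Qed.

Lemma newton_basisS_at0 k : newton_basis k.+1 0 = 0.
Proof. by rewrite /newton_basis big_ord_recl /= addr0 mul0r mulr0. Qed.

Lemma backdiff_newton_basis k : backdiff (newton_basis k.+1) =1 newton_basis k.
Proof.
move=> x; rewrite /backdiff /newton_basis big_ord_recr /= [in X in _ - X]big_ord_recl /=.
set P := \prod_(i < k) (x%:~R + i%:R).
have -> : \prod_(i < k) ((x - 1)%:~R + (lift ord0 i)%:R) = P :> K.
  apply: eq_bigr => i _; rewrite /= /bump /= add1n -natr1 rmorphB /=; ring.
have kf_neq0 : (k`!%:R : K) != 0 by rewrite pnatr_eq0 -lt0n fact_gt0.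
have k1_neq0 : (k%:R + 1 : K) != 0 by rewrite natr1 pnatr_eq0.
rewrite factS natrM rmorphB /= -natr1; field.
by rewrite kf_neq0 k1_neq0.
Qed.

Lemma backdiff_eq0_const h : backdiff h =1 (fun _ => 0) -> forall x, h x = h 0.
Proof.
move=> dh; have step x : h x = h (x - 1) by apply/subr0_eq/dh.
elim/int_rec => [//|k IH|k IH].
  by rewrite -IH step -addn1 PoszD addrK.
by rewrite -IH [h (- k%:Z)]step -addn1 PoszD opprD.
Qed.

Lemma newton_expansion D h : iter D.+1 backdiff h =1 (fun _ => 0) ->
  forall x, h x = \sum_(k < D.+1) iter k backdiff h 0 * newton_basis k x.
Proof.
elim: D h => [|D IH] h hD x.
  by rewrite big_ord1 /= newton_basis0 mulr1; apply: backdiff_eq0_const.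
pose N y := \sum_(k < D.+2) iter k backdiff h 0 * newton_basis k y.
have IHd : forall y, backdiff h y =
    \sum_(k < D.+1) iter k backdiff (backdiff h) 0 * newton_basis k y.
  by apply: IH => z; have := hD z; rewrite iterSr.
have dN : backdiff N =1 backdiff h.
  move=> y; rewrite IHd [LHS]/backdiff /N -sumrB big_ord_recl /=.
  rewrite !newton_basis0 subrr add0r; apply: eq_bigr => i _.
  rewrite -mulrBr /bump /= add0n add1n -iterSr.
  by rewrite [_ - _](backdiff_newton_basis i y).
have N0 : N 0 = h 0.
  rewrite /N big_ord_recl /= newton_basis0 mulr1 big1 ?addr0 // => i _.
  by rewrite newton_basisS_at0 mulr0.
suff /backdiff_eq0_const /(_ x) : backdiff (fun y => h y - N y) =1 (fun _ => 0).
  by rewrite N0 subrr => /subr0_eq.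
move=> y; have := dN y; rewrite /backdiff => eN.
have -> : h y - N y - (h (y - 1) - N (y - 1)) =
          (h y - h (y - 1)) - (N y - N (y - 1)) by ring.
by rewrite eN subrr.
Qed.

End Newton.

Section NewtonLine.
Variables (V : finType) (K : numFieldType).
Implicit Types (F : (V -> int) -> K) (f : V -> int).

Lemma iter_backdiff_line F f a k x :
  iter k backdiff (fun y => F (fun v => if v == a then y else f v)) x =
  iter k (fdiff (courant a)) F (fun v => if v == a then x else f v).
Proof.
elim: k x => [//|k IH] x /=; rewrite /backdiff /fdiff !IH; congr (_ - iter _ _ F _).
by apply: functional_extensionality => v; rewrite /courant; case: (v == a); rewrite ?subr0.
Qed.

Lemma newton_expansion_courant D F a f : deg_lt D.+1 F ->
  F f = \sum_(k < D.+1) iter k (fdiff (courant a)) F (fun v => if v == a then 0 else f v)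
                      * newton_basis k (f a).
Proof.
move=> hF; pose h y := F (fun v => if v == a then y else f v).
have -> : F f = h (f a).
  by congr F; apply: functional_extensionality => v; case: eqP => [->|].
rewrite (@newton_expansion _ D h) => [|x].
  by apply: eq_bigr => k _; rewrite iter_backdiff_line.
by rewrite iter_backdiff_line; apply: (deg_lt_iter_fdiff (j := 0)).
Qed.

End NewtonLine.

Section MPolyDifferences.
Variable V : finType.
Local Notation MP := {mpoly rat[#|V|]}.
Implicit Types (p q : MP) (F : (V -> int) -> rat).

Lemma deg_lt_eval_at p D : (msize p <= D)%N -> deg_lt D (eval_at p).
Proof.
move=> hp; apply: eq_deg_lt (fun f => esym (mevalE _ _)) _.
apply: deg_lt_sum => m pm; apply: deg_ltZ.
apply: deg_lt_leq (leq_trans (msize_mdeg_lt pm) hp) _.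
rewrite mdegE; exact: deg_lt_prod (fun i => deg_lt_coord _ (enum_val i)).
Qed.

Lemma msizeD_le p q : (msize (p + q) <= maxn (msize p) (msize q))%N.
Proof. exact: mmeasureD_le. Qed.

Lemma msize_sum_le (I : Type) (r : seq I) (P : I -> MP) k :
  (forall i, msize (P i) <= k)%N -> (msize (\sum_(i <- r) P i) <= k)%N.
Proof.
move=> hP; apply: leq_trans (mmeasure_sum _ r P xpredT) _.
by elim/big_ind: _ => // x y; rewrite geq_max => -> ->.
Qed.

Lemma msizeM_le_pred p q : (msize (p * q) <= (msize p + msize q).-1)%N.
Proof.
have [->|p_neq0] := eqVneq p 0; first by rewrite mul0r msize0.
have [->|q_neq0] := eqVneq q 0; first by rewrite mulr0 msize0.
by rewrite msizeM.
Qed.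

Definition newton_mpoly (k : nat) (i : 'I_#|V|) : MP :=
  (k`!%:R)^-1 *: \prod_(j < k) ('X_i + (j%:R)%:MP).

Lemma msize_newton_mpoly k i : (msize (newton_mpoly k i) <= k.+1)%N.
Proof.
apply: leq_trans (msizeZ_le _ _) _; elim: k => [|k IH]; first by rewrite big_ord0 msize1.
rewrite big_ord_recr /=; apply: leq_trans (msizeM_le_pred _ _) _.
have lin : (msize ('X_i + (k%:R)%:MP : MP) <= 2)%N.
  apply: leq_trans (msizeD_le _ _) _; rewrite geq_max msizeX mdeg1 mmeasureC.
  by case: (_ != 0).
by move: IH lin; move: (msize _) (msize _) => x y; lia.
Qed.

Lemma eval_at_newton_mpoly k a f :
  eval_at (newton_mpoly k (enum_rank a)) f = newton_basis k (f a).
Proof.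
rewrite /eval_at mevalZ (big_morph _ (mevalM _) (meval1 _)) /newton_basis.
by congr (_ * _); apply: eq_bigr => j _; rewrite mevalD mevalXU mevalC enum_rankK.
Qed.

Lemma mpoly_of_deg_lt_on (l : seq V) D F : deg_lt D.+1 F -> depends_on l F ->
  exists p : MP, (msize p <= D.+1)%N /\ F =1 eval_at p.
Proof.
elim: l D F => [|a l IH] D F hF dF.
  exists (F (fun _ => 0))%:MP; split; first by rewrite mmeasureC; case: (_ != 0).
  by move=> f; rewrite /eval_at mevalC; apply: dF.
(* Newton expansion in the variable a; its coefficients involve only l. *)
pose zero_at_a (f : V -> int) v : int := if v == a then 0 else f v.
pose G (k : 'I_D.+1) (f : V -> int) := iter k (fdiff (courant a)) F (zero_at_a f).
have hG (k : 'I_D.+1) : exists P : MP, (msize P <= (D - k).+1)%N /\ G k =1 eval_at P.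
  apply: IH.
    apply: (deg_lt_comp (L := zero_at_a)) => [f w v|].
      by rewrite /zero_at_a; case: (v == a); rewrite ?subr0.
    by apply: deg_lt_iter_fdiff; rewrite addSn subnK // -ltnS.
  move=> f g fg; apply: depends_on_iter_fdiff dF _ _ _ => v.
  by rewrite /zero_at_a inE; case: (v == a) => //= /fg.
have [P HP] := fin_all_exists hG.
exists (\sum_(k < D.+1) P k * newton_mpoly k (enum_rank a)); split.
  apply: msize_sum_le => k; apply: leq_trans (msizeM_le_pred _ _) _.
  have := (HP k).1; have := msize_newton_mpoly k (enum_rank a); have := ltn_ord k.
  by move: (msize _) (msize _) => x y; lia.
move=> f; rewrite (newton_expansion_courant a f hF) /eval_at rmorph_sum /=.
by apply: eq_bigr => k _; rewrite mevalM -!/(eval_at _ _) -(HP k).2 eval_at_newton_mpoly.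
Qed.

Lemma mpoly_of_deg_lt D F : deg_lt D.+1 F ->
  exists p : MP, (msize p <= D.+1)%N /\ F =1 eval_at p.
Proof.
by move=> hF; apply: (mpoly_of_deg_lt_on (l := enum V)) => // f g fg; congr F;
  apply: functional_extensionality => v; rewrite fg ?mem_enum.
Qed.

End MPolyDifferences.

Section EhrhartFunctions.
Variables (n : nat) (V : finType) (u : V -> 'rV[int]_n) (C : {set {set V}}).
Hypothesis fanC : unimodular_fan u C.
Implicit Types (s t S : {set V}) (chi psi : (V -> int) -> int) (f g : V -> int).

Lemma pairing0l (x : 'rV[int]_n) : pairing (0 : 'rV[int]_n) x = 0.
Proof. by rewrite /pairing big1 // => i _; rewrite mxE mul0r. Qed.

Lemma pairingZl (c : int) (m x : 'rV[int]_n) : pairing (c *: m) x = c * pairing m x.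
Proof. by rewrite /pairing mulr_sumr; apply: eq_bigr => i _; rewrite mxE mulrA. Qed.

Lemma well_defined_link s chi f g :
  well_defined u C s chi -> {in link C s, f =1 g} -> chi f = chi g.
Proof.
move=> wd fg; apply: wd; exists 0; split=> [v _|v hv]; first by rewrite pairing0l.
by rewrite pairing0l fg // subrr.
Qed.

Lemma is_chiF_well_defined d s chi : is_chiF u C d s chi -> well_defined u C s chi.
Proof. by case: d => [|d] []. Qed.

Lemma is_chiF_at0 d s chi : is_chiF u C d s chi -> chi (fun _ => 0) = 1.
Proof. by case: d => [|d] []. Qed.

Lemma is_chiF0_link s chi : is_chiF u C 0 s chi -> link C s = set0.
Proof. by case. Qed.

Lemma exists_dual_pairing r s : r \in link C s -> exists m : 'rV[int]_n,
  (forall v, v \in s -> pairing m (u v) = 0) /\ pairing m (u r) = 1.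
Proof.
rewrite inE => /andP [rs rsC]; have [_ _ _ _ unimod] := fanC.
have [B [uB [e [einj erow]]]] := unimod _ rsC.
pose y : 'cV[int]_n := delta_mx (e r) 0.
pose z := invmx B *m y.
have ev v : v \in r |: s -> pairing z^T (u v) = y (e v) 0.
  move=> vrs; rewrite -(erow v vrs) -[y](mulKVmx uB) /pairing mxE.
  by apply: eq_bigr => i _; rewrite !mxE mulrC.
have rrs : r \in r |: s by rewrite setU11.
exists z^T; split=> [v vs|]; last by rewrite ev // mxE !eqxx.
have vrs : v \in r |: s by rewrite setU1r.
rewrite ev // mxE andbT; case: eqP => // /(einj _ _ vrs rrs) evr.
by move: rs; rewrite -evr vs.
Qed.

(* With m dual to a, [star_rep m a f] represents [f]^a: it is f minus the
   linear function [f a *: m], which agrees with f on the cone a |: s. *)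
Definition star_rep (m : 'rV[int]_n) (a : V) f : V -> int :=
  fun v => f v - f a * pairing m (u v).

Lemma star_repB m a f g v :
  star_rep m a (fun x => f x - g x) v = star_rep m a f v - star_rep m a g v.
Proof. by rewrite /star_rep; ring. Qed.

Lemma fdiff_courant_notin_link s chi a f :
  well_defined u C s chi -> a \notin link C s -> fdiff (courant a) chi f = 0.
Proof.
move=> wd ha; rewrite /fdiff.
rewrite (well_defined_link (g := fun v => f v - courant a v) wd) ?subrr //.
by move=> v hv; rewrite /courant; case: eqVneq ha => [<-|_ _]; rewrite ?hv ?subr0.
Qed.

Lemma fdiff_courant_link d s chi psi a m f :
  is_chiF u C d.+1 s chi -> a \in link C s -> is_chiF u C d (a |: s) psi ->
  (forall v, v \in s -> pairing m (u v) = 0) -> pairing m (u a) = 1 ->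
  fdiff (courant a) chi f = psi (star_rep m a f).
Proof.
move=> [_ _ rec] ha hpsi ms ma.
have fam_s v : v \in s -> pairing (f a *: m) (u v) = 0.
  by move=> vs; rewrite pairingZl ms // mulr0.
have fam_a : pairing (f a *: m) (u a) = f a by rewrite pairingZl ma mulr1.
rewrite /fdiff ((rec a ha).2 psi hpsi f _ fam_s fam_a) addrAC subrr add0r.
by congr psi; apply: functional_extensionality => v; rewrite pairingZl.
Qed.

Definition max_cone_card t : nat := \max_(S in C | t \subset S) #|S|.

Definition star_dim t : nat := (max_cone_card t - #|t|)%N.

Lemma leq_max_cone_card t S : S \in C -> t \subset S -> (#|S| <= max_cone_card t)%N.
Proof. by move=> SC tS; apply: leq_bigmax_cond; rewrite SC tS. Qed.

Lemma max_cone_cardU1 a t : (max_cone_card (a |: t) <= max_cone_card t)%N.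
Proof.
apply/bigmax_leqP => S /andP [SC atS]; apply: leq_max_cone_card => //.
exact: subset_trans (subsetUr _ _) atS.
Qed.

Lemma max_cone_card_attained t : (0 < max_cone_card t)%N ->
  exists2 S, (S \in C) && (t \subset S) & #|S| = max_cone_card t.
Proof.
case: (pickP [pred S | (S \in C) && (t \subset S)]) => [S0 hS0 _ | none]; last first.
  by rewrite /max_cone_card big_pred0.
have /(eq_bigmax_cond (fun S : {set V} => #|S|)) [S hS eS] :
    (0 < #|[pred S | (S \in C) && (t \subset S)]|)%N by apply/card_gt0P; exists S0.
by exists S; rewrite // /max_cone_card eS.
Qed.

Lemma card_link_setU1 a s : a \in link C s -> #|a |: s| = #|s|.+1.
Proof. by rewrite inE cardsU1 => /andP [-> _]. Qed.

Lemma star_dim_link a s : a \in link C s -> (star_dim (a |: s) < star_dim s)%N.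
Proof.
move=> ha; have [asC _] : (a |: s \in C) /\ a \notin s by move: ha; rewrite inE => /andP [].
have := leq_max_cone_card asC (subxx _); have := max_cone_cardU1 a s.
rewrite /star_dim card_link_setU1 //; move: (max_cone_card _) (max_cone_card _) => x y; lia.
Qed.

Lemma star_dim_link_pred s k : star_dim s = k.+1 ->
  exists2 a, a \in link C s & star_dim (a |: s) = k.
Proof.
rewrite /star_dim => hk; have [_ _ faces _ _] := fanC.
have [|S /andP [SC sS] eS] := @max_cone_card_attained s; first lia.
have /subsetPn [a aS as_] : ~~ (S \subset s).
  by apply/negP => /subset_leq_card; rewrite eS; lia.
have asS : a |: s \subset S by rewrite subUset sub1set aS sS.
have ha : a \in link C s by rewrite inE as_ (faces S).
exists a => //; rewrite card_link_setU1 //.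
have := leq_max_cone_card SC asS; have := max_cone_cardU1 a s; lia.
Qed.

Lemma is_chiF_deg_lt d s chi : is_chiF u C d s chi -> deg_lt (star_dim s).+1 chi.
Proof.
elim: d s chi => [|d IH] s chi hchi; apply: deg_lt_courant => a;
  have wd := is_chiF_well_defined hchi.
  apply: eq_deg_lt (deg_lt_zero _ _ _) => f.
  by rewrite (fdiff_courant_notin_link _ wd) // (is_chiF0_link hchi) inE.
have [ha|ha] := boolP (a \in link C s); last first.
  by apply: eq_deg_lt (deg_lt_zero _ _ _) => f; rewrite (fdiff_courant_notin_link _ wd).
have [_ _ rec] := hchi; have [[psi hpsi] _] := rec a ha.
have [m [ms ma]] := exists_dual_pairing ha.
apply: eq_deg_lt (fun f => esym (fdiff_courant_link f hchi ha hpsi ms ma)) _.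
exact: deg_lt_leq (star_dim_link ha) (deg_lt_comp (star_repB m a) (IH _ _ hpsi)).
Qed.

Lemma is_chiF_not_deg_lt d s chi : is_chiF u C d s chi -> ~ deg_lt (star_dim s) chi.
Proof.
elim: d s chi => [|d IH] s chi hchi; case hk: (star_dim s) => [|k].
- by move=> /(_ (fun _ => 0)); rewrite (is_chiF_at0 hchi).
- have [a] := star_dim_link_pred hk.
  by rewrite (is_chiF0_link hchi) inE.
- by move=> /(_ (fun _ => 0)); rewrite (is_chiF_at0 hchi).
have [a ha hka] := star_dim_link_pred hk.
have [_ _ rec] := hchi; have [[psi hpsi] _] := rec a ha.
have [m [ms ma]] := exists_dual_pairing ha.
move=> /(_ (courant a)) chi_deg; apply: (IH _ _ hpsi); rewrite hka.
(* Zeroing the coordinate a makes [star_rep m a] the identity on link (a |: s). *)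
pose zero_at_a f v : int := if v == a then 0 else f v.
have psi_deg : deg_lt k (fun f => psi (star_rep m a f)).
  exact: eq_deg_lt (fun f => fdiff_courant_link f hchi ha hpsi ms ma) chi_deg.
have zero_atB f w v : zero_at_a (fun x => f x - w x) v = zero_at_a f v - zero_at_a w v.
  by rewrite /zero_at_a; case: (v == a); rewrite ?subr0.
apply: eq_deg_lt (deg_lt_comp zero_atB psi_deg) => f.
apply: well_defined_link (is_chiF_well_defined hpsi) _ => v.
rewrite /star_rep /zero_at_a eqxx mul0r subr0 inE => /andP [].
by case: eqVneq => // ->; rewrite setU11.
Qed.

Lemma is_chiF_unique d s chi1 chi2 :
  is_chiF u C d s chi1 -> is_chiF u C d s chi2 -> chi1 =1 chi2.
Proof.
move=> h1 h2 f; pose D g := chi1 g - chi2 g.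
have D_cst : deg_lt 1 D.
  apply: deg_lt_courant => a g /=.
  have -> : fdiff (courant a) D g = fdiff (courant a) chi1 g - fdiff (courant a) chi2 g.
    by rewrite /fdiff /D; ring.
  have [ha|ha] := boolP (a \in link C s); last first.
    rewrite (fdiff_courant_notin_link _ (is_chiF_well_defined h1)) //.
    by rewrite (fdiff_courant_notin_link _ (is_chiF_well_defined h2)) ?subrr.
  case: d h1 h2 => [|d] h1 h2; first by move: ha; rewrite (is_chiF0_link h1) inE.
  have [_ _ rec] := h1; have [[psi hpsi] _] := rec a ha.
  have [m [ms ma]] := exists_dual_pairing ha.
  rewrite (fdiff_courant_link _ h1 ha hpsi ms ma).
  by rewrite (fdiff_courant_link _ h2 ha hpsi ms ma) subrr.
apply/eqP; rewrite -subr_eq0 -/(D f) (deg_lt1P f (fun _ => 0) D_cst) /D.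
by rewrite (is_chiF_at0 h1) (is_chiF_at0 h2) subrr.
Qed.

Lemma star_dim0 : star_dim set0 = fan_dim C.
Proof. by rewrite /star_dim cards0 subn0; apply: eq_bigl => S; rewrite sub0set andbT. Qed.

End EhrhartFunctions.

Theorem proposition3 (n : nat) (V : finType) (u : V -> 'rV[int]_n)
  (C : {set {set V}}) :
  unimodular_fan u C -> ehrhart u C ->
  exists chi : (V -> int) -> int,
    [/\ is_chi u C set0 chi,
        forall chi' : (V -> int) -> int, is_chi u C set0 chi' ->
          forall f : V -> int, chi' f = chi f &
        exists p : {mpoly rat[#|V|]},
          msize p = (fan_dim C).+1 /\
          forall f : V -> int, (chi f)%:~R = eval_at p f].
Proof.
move=> fanC [chi hchi]; exists chi; split=> // [chi' hchi'|].
  exact: (is_chiF_unique fanC hchi' hchi).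
have chi_deg := is_chiF_deg_lt fanC hchi; rewrite star_dim0 in chi_deg.
have chi_not_deg := is_chiF_not_deg_lt fanC hchi; rewrite star_dim0 in chi_not_deg.
have [p [size_p chi_p]] := mpoly_of_deg_lt ((deg_lt_intr rat _ _).2 chi_deg).
exists p; split=> //; apply/eqP; rewrite eqn_leq size_p ltnNge; apply/negP => size_p'.
apply/chi_not_deg/(deg_lt_intr rat); apply: eq_deg_lt (deg_lt_eval_at size_p') => f.
by rewrite chi_p.
Qed.
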